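(* Let $T$ be Takagi's function on $[0,1]$, $T(x)=\sum_{n=1}^\infty 2^{-n}\phi^{(n)}(x)$, with $\phi$ the tent map $\phi(x)=2x$ on $[0,1/2]$, $\phi(x)=2-2x$ on $[1/2,1]$. Let $x\in(0,1)$ be non-dyadic, with binary expansion $x=\sum_{k\ge1}2^{-k}\varepsilon_k$, and write $x=\sum_{n\ge1}2^{-a_n}$, $1-x=\sum_{n\ge1}2^{-b_n}$ with $\{a_n\},\{b_n\}$ strictly increasing sequences of positive integers. Suppose the limit $d_1(x):=\lim_{n\to\infty}\frac1n\sum_{k=1}^n\varepsilon_k$ exists. If either (a) $0<d_1(x)<1/2$, or (b) $d_1(x)=0$ and $\limsup_{n\to\infty}a_{n+1}/a_n<2$, then $T'(x)=+\infty$. If either (a) $1/2<d_1(x)<1$, or (b) $d_1(x)=1$ and $\limsup_{n\to\infty}b_{n+1}/b_n<2$, then $T'(x)=-\infty$.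
   Context: $T'(x)=\pm\infty$ means the two-sided limit $\lim_{h\to0}(T(x+h)-T(x))/h$ equals $\pm\infty$. A dyadic point is one of the form $k/2^m$. *)

From Stdlib Require Import Reals Lra ZArith.
From Coquelicot Require Import Coquelicot.
Open Scope R_scope.

Definition tent (x : R) : R := if Rle_dec x (1/2) then 2 * x else 2 - 2 * x.

Definition tent_iter (n : nat) (x : R) : R := Nat.iter n tent x.

Definition takagi (x : R) : R :=
  Series (fun n : nat => / 2 ^ (S n) * tent_iter (S n) x).

Definition dyadic (x : R) : Prop := exists (k : Z) (m : nat), x = IZR k / 2 ^ m.

From Stdlib Require Import Reals ZArith Lra Lia Classical.
From Coquelicot Require Import Coquelicot.
Open Scope R_scope.

(* Write Q(h) = (T(x+h) - T(x))/h.  The n-th term 2^-n phi^(n) of T is affine on the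
   dyadic cells of level n, with slope 1 - 2 eps_n on the cell of x.  So if x + h lies in
   the level-M cell of x and 2^-(M+K+1) <= |h| < 2^-(M+K), the first M terms contribute
   exactly the balance D_M = #zeros - #ones among eps_1..eps_M, the next K+1 terms at most
   1 each, and the rest at most 1: |Q(h) - D_M| <= K + 2.  Taking M maximal, the digits
   eps_(M+2) .. eps_(M+K) are all 1 when h > 0 and all 0 when h < 0.  If the frequency of
   ones is d < 1/2, D_M grows linearly in M.  A run of K ones costs nothing, since then
   D_M - K >= D_(M+K) - 2; a run of K zeros is a small fraction of M, because it would
   lower the frequency of ones (case d > 0) or because it lies in a gap
   a_n <= M + 1 <= M + K < a_(n+1) <= c a_n with c < 2 (case d = 0).  The identity T(1 - x) = T(x), which
   complements the digits, gives the case -oo. *)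

Lemma tent_lipschitz a b : Rabs (tent a - tent b) <= 2 * Rabs (a - b).
Proof.
  unfold tent; destruct (Rle_dec a (1/2)), (Rle_dec b (1/2));
    unfold Rabs; repeat destruct Rcase_abs; lra.
Qed.

Lemma tent_range y : 0 <= y <= 1 -> 0 <= tent y <= 1.
Proof. unfold tent; destruct (Rle_dec y (1/2)); lra. Qed.

Lemma tent_reflect y : tent (1 - y) = tent y.
Proof. unfold tent; destruct (Rle_dec (1 - y) (1/2)), (Rle_dec y (1/2)); lra. Qed.

Lemma tent_iter_lipschitz n a b :
  Rabs (tent_iter n a - tent_iter n b) <= 2 ^ n * Rabs (a - b).
Proof.
  induction n as [|n IH]; simpl; [lra|].
  apply (Rle_trans _ _ _ (tent_lipschitz _ _)).
  fold (tent_iter n a) (tent_iter n b). nra.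
Qed.

Lemma tent_iter_range n y : 0 <= y <= 1 -> 0 <= tent_iter n y <= 1.
Proof. intros Hy; induction n; simpl; [lra | apply tent_range; assumption]. Qed.

Lemma tent_iter_succ n y : tent_iter (S n) y = tent_iter n (tent y).
Proof.
  induction n as [|n IH]; [reflexivity|].
  change (tent (tent_iter (S n) y) = tent (tent_iter n (tent y))). now rewrite IH.
Qed.

Lemma tent_iter_reflect n y : tent_iter (S n) (1 - y) = tent_iter (S n) y.
Proof. now rewrite !tent_iter_succ, tent_reflect. Qed.

Lemma tent_iter_on_cell j : forall y N, 0 <= y <= 1 ->
  IZR N <= 2 ^ j * y <= IZR N + 1 ->
  tent_iter j y = if Z.even N then 2 ^ j * y - IZR N else IZR N + 1 - 2 ^ j * y.
Proof.
  induction j as [|j IH]; intros y N Hy HN.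
  - simpl in *.
    assert (HN1 : (N <= 1)%Z) by (apply le_IZR; lra).
    assert (HN2 : (-1 <= N)%Z) by (apply le_IZR; lra).
    assert (HN3 : (N = -1 \/ N = 0 \/ N = 1)%Z) by lia.
    destruct HN3 as [E|[E|E]]; subst N; simpl in *; lra.
  - set (K := (N / 2)%Z). set (r := (N - 2 * K)%Z).
    assert (Hr : (r = 0 \/ r = 1)%Z) by (unfold r, K; Z.div_mod_to_equations; lia).
    assert (HNr : N = (r + 2 * K)%Z) by (unfold r; lia).
    rewrite HNr, plus_IZR, mult_IZR in HN |- *. rewrite Z.even_add_mul_2.
    assert (HK : IZR K <= 2 ^ j * y <= IZR K + 1)
      by (simpl in HN; destruct Hr as [E|E]; rewrite E in HN; simpl in HN; lra).
    change (tent_iter (S j) y) with (tent (tent_iter j y)).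
    rewrite (IH y K Hy HK). simpl pow in *.
    destruct Hr as [E|E]; rewrite E in *; simpl Z.even; simpl IZR in *;
      destruct (Z.even K); unfold tent; destruct Rle_dec; lra.
Qed.

(** * Partial sums and powers of 2 *)

Fixpoint psum (u : nat -> R) (n : nat) : R :=
  match n with O => 0 | S n' => psum u n' + u n' end.

Lemma series_bounds u l lo hi N : is_series u l ->
  (forall m, (N <= m)%nat -> lo <= psum u m <= hi) -> lo <= l <= hi.
Proof.
  intros Hu Hb.
  assert (Hlim : is_lim_seq (psum u) l).
  { apply is_lim_seq_incr_1. apply (is_lim_seq_ext (sum_n u)); [|exact Hu].
    intros n; induction n as [|n IH].
    - rewrite sum_O. simpl. lra.
    - rewrite sum_Sn, IH. reflexivity. }
  split.
  - apply (is_lim_seq_le_loc (fun _ => lo) (psum u) lo l); auto using is_lim_seq_const.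
    exists N. intros m Hm. apply Hb, Hm.
  - apply (is_lim_seq_le_loc (psum u) (fun _ => hi) l hi); auto using is_lim_seq_const.
    exists N. intros m Hm. apply Hb, Hm.
Qed.

Lemma psum_le_psum u j m : (j <= m)%nat -> (forall k, 0 <= u k) -> psum u j <= psum u m.
Proof. intros Hjm Hu. induction Hjm as [|m _ IH]; simpl; [lra|]. specialize (Hu m). lra. Qed.

Lemma psum_diff_abs_le u v j m : (j <= m)%nat ->
  (forall k, (j <= k < m)%nat -> Rabs (u k) <= v k) ->
  Rabs (psum u m - psum u j) <= psum v m - psum v j.
Proof.
  intros Hjm. induction Hjm as [|m Hjm IH]; intros Hb; simpl.
  - rewrite Rminus_diag, Rabs_R0. lra.
  - replace (psum u m + u m - psum u j) with ((psum u m - psum u j) + u m) by ring.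
    apply (Rle_trans _ _ _ (Rabs_triang _ _)).
    assert (Rabs (psum u m - psum u j) <= psum v m - psum v j) by (apply IH; intros; apply Hb; lia).
    specialize (Hb m ltac:(lia)). lra.
Qed.

Lemma psum_const c n : psum (fun _ => c) n = INR n * c.
Proof. induction n as [|n IH]; simpl psum; [simpl; ring|]. rewrite IH, S_INR. ring. Qed.

Lemma psum_half_pow r n : psum (fun k => r / 2 ^ S k) n = r * (1 - / 2 ^ n).
Proof.
  induction n as [|n IH]; cbn [psum]; [simpl; field|].
  rewrite IH. pose proof (pow_lt 2 n ltac:(lra)). simpl pow. field. lra.
Qed.

Lemma is_series_half_pow : is_series (fun k => 1 / 2 ^ S k) 1.
Proof.
  assert (H : is_lim_seq (sum_n (fun k => 1 / 2 ^ S k)) 1).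
  { apply (is_lim_seq_ext (fun n => 1 - (/ 2) ^ S n)).
    - intros n. symmetry. induction n as [|n IH].
      + rewrite sum_O. simpl. field.
      + rewrite sum_Sn, IH. unfold plus; simpl. rewrite pow_inv. field. apply pow_nonzero. lra.
    - assert (Hgeom : is_lim_seq (fun n => (/ 2) ^ S n) 0).
      { apply (is_lim_seq_incr_1 (fun n => (/ 2) ^ n)), is_lim_seq_geom.
        rewrite Rabs_pos_eq; lra. }
      pose proof (is_lim_seq_minus' _ _ _ _ (is_lim_seq_const 1) Hgeom) as Hlim.
      rewrite Rminus_0_r in Hlim. exact Hlim. }
  exact H.
Qed.

Lemma exists_last (P : nat -> Prop) n0 m : P n0 -> ~ P m -> (n0 <= m)%nat ->
  exists M, (n0 <= M)%nat /\ P M /\ ~ P (S M).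
Proof.
  intros H0 Hm Hle. induction m as [|m IH].
  - assert (n0 = 0)%nat by lia. subst. contradiction.
  - destruct (Nat.eq_dec n0 (S m)) as [->|Hne]; [contradiction|].
    destruct (classic (P m)) as [Hp|Hp].
    + exists m. repeat split; auto; lia.
    + apply IH; auto; lia.
Qed.

Lemma pow_inv_pos n : 0 < / 2 ^ n.
Proof. apply Rinv_0_lt_compat, pow_lt; lra. Qed.

Lemma pow_inv_le m n : (m <= n)%nat -> / 2 ^ n <= / 2 ^ m.
Proof. intros H. apply Rinv_le_contravar; [apply pow_lt; lra | apply Rle_pow; [lra | exact H]]. Qed.

Lemma pow_inv_mul_lt r M K : / 2 ^ S M * r < / 2 ^ (M + K) -> r * 2 ^ K < 2.
Proof.
  intros H. rewrite pow_add in H. simpl pow in H. rewrite !Rinv_mult in H.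
  pose proof (pow_lt 2 M ltac:(lra)). pose proof (pow_lt 2 K ltac:(lra)).
  apply (Rmult_lt_compat_r (2 * 2 ^ M * 2 ^ K)) in H; [|nra].
  replace (/ 2 * / 2 ^ M * r * (2 * 2 ^ M * 2 ^ K)) with (r * 2 ^ K) in H by (field; lra).
  replace (/ 2 ^ M * / 2 ^ K * (2 * 2 ^ M * 2 ^ K)) with 2 in H by (field; lra).
  exact H.
Qed.

Lemma exists_pow_inv_lt h n0 : 0 < h -> exists m, (n0 <= m)%nat /\ / 2 ^ m < h.
Proof.
  intros Hh. destruct (INR_archimed h 1 Hh) as [n Hn].
  assert (Hn2 : INR n < 2 ^ n).
  { clear. induction n as [|n IH]; [simpl; lra|].
    rewrite S_INR. simpl pow. pose proof (pow_R1_Rle 2 n ltac:(lra)). lra. }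
  exists (n + n0)%nat. split; [lia|].
  apply (Rle_lt_trans _ (/ 2 ^ n)); [apply pow_inv_le; lia|].
  pose proof (pow_lt 2 n ltac:(lra)).
  apply (Rmult_lt_reg_r (2 ^ n)); [lra|]. rewrite Rinv_l by lra. nra.
Qed.

Lemma exists_dyadic_scale M h : 0 < h < / 2 ^ M ->
  exists K, / 2 ^ (M + S K) <= h < / 2 ^ (M + K).
Proof.
  intros [Hh HhM]. destruct (exists_pow_inv_lt h 0 Hh) as [m [_ Hm]].
  destruct (exists_last (fun K => h < / 2 ^ (M + K)) 0 m) as [K [_ [HK1 HK2]]].
  - now rewrite Nat.add_0_r.
  - pose proof (pow_inv_le m (M + m) ltac:(lia)). lra.
  - lia.
  - exists K. split; [lra | exact HK1].
Qed.

Lemma strict_incr_add_le (a : nat -> nat) : (forall n, (a n < a (S n))%nat) ->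
  forall p i, (a p + i <= a (p + i))%nat.
Proof.
  intros Ha p i. induction i as [|i IH]; [rewrite !Nat.add_0_r; lia|].
  rewrite !Nat.add_succ_r. specialize (Ha (p + i)%nat). lia.
Qed.

Lemma psum_inv_pow_strict_incr (a : nat -> nat) p m :
  (forall n, (a n < a (S n))%nat) -> (p <= m)%nat ->
  psum (fun i => / 2 ^ a i) m - psum (fun i => / 2 ^ a i) p <= 2 / 2 ^ a p - 2 / 2 ^ a m.
Proof.
  intros Ha Hpm. induction Hpm as [|m Hpm IH]; [lra|]. cbn [psum].
  pose proof (pow_inv_le (S (a m)) (a (S m)) (Ha m)) as H.
  simpl pow in H. rewrite Rinv_mult in H. unfold Rdiv in *. lra.
Qed.

Lemma pow_mul_psum_inv_pow_integer (a : nat -> nat) m k :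
  (forall i, (i < k)%nat -> (a i <= m)%nat) ->
  exists z, 2 ^ m * psum (fun i => / 2 ^ a i) k = IZR z.
Proof.
  induction k as [|k IH]; intros H.
  - exists 0%Z. simpl. ring.
  - destruct IH as [z Hz]; [intros i Hi; apply H; lia|].
    exists (z + 2 ^ Z.of_nat (m - a k))%Z. cbn [psum].
    rewrite plus_IZR, <- Hz, <- pow_IZR. specialize (H k ltac:(lia)).
    replace m with ((m - a k) + a k)%nat at 1 2 by lia. rewrite pow_add.
    pose proof (pow_lt 2 (a k) ltac:(lra)). field. lra.
Qed.

(** * Takagi's function *)

Definition takagi_term (y : R) (n : nat) : R := / 2 ^ S n * tent_iter (S n) y.

Definition takagi_quotient (x h : R) : R := (takagi (x + h) - takagi x) / h.

Definition takagi_term_quotient (x h : R) (n : nat) : R :=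
  (takagi_term (x + h) n - takagi_term x n) / h.

Lemma takagi_term_range y n : 0 <= y <= 1 -> 0 <= takagi_term y n <= 1 / 2 ^ S n.
Proof.
  intros Hy. unfold takagi_term, Rdiv. rewrite Rmult_1_l.
  pose proof (tent_iter_range (S n) y Hy). pose proof (pow_inv_pos (S n)). split; nra.
Qed.

Lemma is_series_takagi y : 0 <= y <= 1 -> is_series (takagi_term y) (takagi y).
Proof.
  intros Hy. apply Series_correct.
  apply (@ex_series_le R_AbsRing R_CompleteNormedModule _ (fun n => 1 / 2 ^ S n)).
  - intros n. change (Rabs (takagi_term y n) <= 1 / 2 ^ S n).
    pose proof (takagi_term_range y n Hy). rewrite Rabs_pos_eq; lra.
  - exists 1. exact is_series_half_pow.
Qed.

Lemma takagi_reflect y : takagi (1 - y) = takagi y.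
Proof. unfold takagi. apply Series_ext. intros n. now rewrite tent_iter_reflect. Qed.

Lemma takagi_quotient_reflect x h : h <> 0 ->
  takagi_quotient x h = - takagi_quotient (1 - x) (- h).
Proof.
  intros Hh. unfold takagi_quotient.
  rewrite <- (takagi_reflect (x + h)), <- (takagi_reflect x).
  replace (1 - (x + h)) with (1 - x + - h) by ring. field. exact Hh.
Qed.

Lemma is_series_takagi_quotient x h : 0 <= x <= 1 -> 0 <= x + h <= 1 ->
  is_series (takagi_term_quotient x h) (takagi_quotient x h).
Proof.
  intros Hx Hxh.
  pose proof (is_series_scal (/ h) _ _
    (is_series_minus _ _ _ _ (is_series_takagi _ Hxh) (is_series_takagi _ Hx))) as H.
  unfold takagi_quotient, Rdiv. rewrite Rmult_comm.
  apply (is_series_ext _ _ _ (fun n => Rmult_comm _ _) H).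
Qed.

Lemma takagi_term_quotient_abs_le_1 x h n : h <> 0 -> Rabs (takagi_term_quotient x h n) <= 1.
Proof.
  intros Hh. unfold takagi_term_quotient, takagi_term.
  pose proof (pow_lt 2 (S n) ltac:(lra)) as Hp.
  pose proof (Rabs_pos_lt h Hh) as Hah.
  pose proof (tent_iter_lipschitz (S n) (x + h) x) as L.
  replace (x + h - x) with h in L by ring.
  replace ((/ 2 ^ S n * tent_iter (S n) (x + h) - / 2 ^ S n * tent_iter (S n) x) / h)
    with ((tent_iter (S n) (x + h) - tent_iter (S n) x) / (2 ^ S n * h)) by (field; lra).
  unfold Rdiv. rewrite Rabs_mult, Rabs_inv, Rabs_mult, (Rabs_pos_eq (2 ^ S n)) by lra.
  apply (Rmult_le_reg_r (2 ^ S n * Rabs h)); [nra|].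
  rewrite Rmult_assoc, Rinv_l by nra. lra.
Qed.

Lemma takagi_term_quotient_abs_le_pow x h n : h <> 0 -> 0 <= x <= 1 -> 0 <= x + h <= 1 ->
  Rabs (takagi_term_quotient x h n) <= / Rabs h / 2 ^ S n.
Proof.
  intros Hh Hx Hxh. unfold takagi_term_quotient.
  pose proof (takagi_term_range x n Hx). pose proof (takagi_term_range (x + h) n Hxh).
  pose proof (Rabs_pos_lt h Hh).
  unfold Rdiv in *. rewrite Rabs_mult, Rabs_inv, (Rmult_comm (/ Rabs h)).
  apply Rmult_le_compat_r; [left; apply Rinv_0_lt_compat; assumption|].
  unfold Rabs; destruct Rcase_abs; lra.
Qed.

(** * Binary digits of a non-dyadic point *)

Definition digits (x : R) (eps : nat -> nat) : Prop :=
  (forall k, (1 <= k)%nat -> (eps k <= 1)%nat) /\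
  is_series (fun k => INR (eps (S k)) / 2 ^ S k) x.

(* The integer with binary digits eps_1 ... eps_j, i.e. floor (2^j x). *)
Fixpoint digit_prefix (eps : nat -> nat) (j : nat) : Z :=
  match j with
  | O => 0%Z
  | S j' => (2 * digit_prefix eps j' + Z.of_nat (eps (S j')))%Z
  end.

Definition digit_tail (eps : nat -> nat) (x : R) (j : nat) : R :=
  2 ^ j * x - IZR (digit_prefix eps j).

Definition in_cell (eps : nat -> nat) (j : nat) (y : R) : Prop :=
  IZR (digit_prefix eps j) <= 2 ^ j * y <= IZR (digit_prefix eps j) + 1.

Fixpoint ones (eps : nat -> nat) (n : nat) : R :=
  match n with O => 0 | S n' => ones eps n' + INR (eps (S n')) end.

(* The sum of 1 - 2 eps_k over 1 <= k <= n: the slope at x of the n-th partial sum of T. *)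
Definition balance (eps : nat -> nat) (n : nat) : R := INR n - 2 * ones eps n.

Lemma IZR_digit_prefix_succ eps j :
  IZR (digit_prefix eps (S j)) = 2 * IZR (digit_prefix eps j) + INR (eps (S j)).
Proof.
  change (digit_prefix eps (S j)) with (2 * digit_prefix eps j + Z.of_nat (eps (S j)))%Z.
  now rewrite plus_IZR, mult_IZR, INR_IZR_INZ.
Qed.

Lemma digit_tail_succ eps x j :
  digit_tail eps x (S j) = 2 * digit_tail eps x j - INR (eps (S j)).
Proof. unfold digit_tail. rewrite IZR_digit_prefix_succ. simpl pow. ring. Qed.

Lemma digit_tail_psum eps x j :
  digit_tail eps x j = 2 ^ j * (x - psum (fun k => INR (eps (S k)) / 2 ^ S k) j).
Proof.
  induction j as [|j IH]; [unfold digit_tail; simpl; ring|].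
  rewrite digit_tail_succ, IH. cbn [psum].
  pose proof (pow_lt 2 j ltac:(lra)). simpl pow. field. lra.
Qed.

Lemma not_dyadic_pow_mul x j z : ~ dyadic x -> 2 ^ j * x <> IZR z.
Proof.
  intros Hnd E. apply Hnd. exists z, j.
  rewrite <- E. field. apply pow_nonzero. lra.
Qed.

Section Digits.

Variables (x : R) (eps : nat -> nat).
Hypothesis Hdig : digits x eps.

Lemma digit_cases k : eps (S k) = 0%nat \/ eps (S k) = 1%nat.
Proof. destruct Hdig as [H _]. specialize (H (S k) ltac:(lia)). lia. Qed.

Lemma INR_digit_cases k : INR (eps (S k)) = 0 \/ INR (eps (S k)) = 1.
Proof. destruct (digit_cases k) as [E|E]; rewrite E; simpl; auto. Qed.

Lemma in_cell_le M y j : in_cell eps M y -> (j <= M)%nat -> in_cell eps j y.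
Proof.
  intros HM Hj. induction Hj as [|M _ IH]; [exact HM|]. apply IH.
  unfold in_cell in *. rewrite IZR_digit_prefix_succ in HM. simpl pow in HM.
  destruct (INR_digit_cases M) as [E|E]; rewrite E in HM; lra.
Qed.

Hypothesis Hnd : ~ dyadic x.

Lemma digit_tail_range j : 0 < digit_tail eps x j < 1.
Proof.
  set (u := fun k => INR (eps (S k)) / 2 ^ S k).
  assert (Hu : forall k, 0 <= u k <= 1 / 2 ^ S k).
  { intros k. unfold u, Rdiv. pose proof (pow_inv_pos (S k)).
    destruct (INR_digit_cases k) as [E|E]; rewrite E; lra. }
  assert (Hbounds : psum u j <= x <= psum u j + / 2 ^ j).
  { apply (series_bounds u x _ _ j (proj2 Hdig)). intros m Hm. split.
    - apply psum_le_psum; [exact Hm | intros k; apply Hu].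
    - assert (Hd : Rabs (psum u m - psum u j) <= 1 * (1 - / 2 ^ m) - 1 * (1 - / 2 ^ j)).
      { rewrite <- !psum_half_pow. apply psum_diff_abs_le; [exact Hm|].
        intros k _. rewrite Rabs_pos_eq; apply Hu. }
      pose proof (pow_inv_pos m). apply Rabs_le_between in Hd. lra. }
  pose proof (pow_lt 2 j ltac:(lra)) as Hp.
  assert (Ht : 0 <= digit_tail eps x j <= 1).
  { rewrite digit_tail_psum. fold u.
    assert (E : 2 ^ j * / 2 ^ j = 1) by (field; lra). nra. }
  pose proof (not_dyadic_pow_mul x j (digit_prefix eps j) Hnd) as Hne0.
  pose proof (not_dyadic_pow_mul x j (digit_prefix eps j + 1) Hnd) as Hne1.
  rewrite plus_IZR in Hne1. unfold digit_tail in *.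
  split; apply Rnot_le_lt; intros C; [apply Hne0 | apply Hne1]; lra.
Qed.

Lemma digits_point_range : 0 < x < 1.
Proof. pose proof (digit_tail_range 0) as Ht. unfold digit_tail in Ht. simpl in Ht. lra. Qed.

Lemma in_cell_point j : in_cell eps j x.
Proof. pose proof (digit_tail_range j). unfold digit_tail, in_cell in *. lra. Qed.

Lemma in_cell_right M h : 0 <= h <= / 2 ^ M * (1 - digit_tail eps x M) ->
  in_cell eps M (x + h).
Proof.
  intros Hh. pose proof (in_cell_point M). pose proof (pow_lt 2 M ltac:(lra)).
  unfold in_cell, digit_tail in *.
  assert (E : 2 ^ M * / 2 ^ M = 1) by (field; lra). nra.
Qed.

(* The parity of the level-(k+1) prefix is eps_(k+1), which fixes the sign of the slope
   of phi^(k+1) on the cell. *)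
Lemma takagi_term_quotient_in_cell k h : h <> 0 -> 0 <= x + h <= 1 ->
  in_cell eps (S k) (x + h) -> takagi_term_quotient x h k = 1 - 2 * INR (eps (S k)).
Proof.
  intros Hh Hxh Hcell. pose proof digits_point_range as Hx.
  pose proof (in_cell_point (S k)) as Hcellx. unfold in_cell in *.
  unfold takagi_term_quotient, takagi_term.
  rewrite (tent_iter_on_cell (S k) (x + h) _ Hxh Hcell),
          (tent_iter_on_cell (S k) x _ ltac:(lra) Hcellx).
  change (digit_prefix eps (S k)) with (2 * digit_prefix eps k + Z.of_nat (eps (S k)))%Z.
  rewrite Z.add_comm, Z.even_add_mul_2, plus_IZR, mult_IZR.
  pose proof (pow_lt 2 k ltac:(lra)).
  destruct (digit_cases k) as [E|E]; rewrite E; simpl; field; lra.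
Qed.

Lemma psum_takagi_term_quotient M h : h <> 0 -> 0 <= x + h <= 1 ->
  in_cell eps M (x + h) -> psum (takagi_term_quotient x h) M = balance eps M.
Proof.
  intros Hh Hxh Hcell. unfold balance.
  induction M as [|M IH]; [simpl; ring|].
  cbn [psum ones]. rewrite IH by (apply (in_cell_le (S M)); auto).
  rewrite takagi_term_quotient_in_cell by auto. rewrite S_INR. ring.
Qed.

(* Digits up to the common cell contribute the balance, the next L digits at most 1 each,
   and the remaining terms at most the geometric tail of |T(x+h) - T(x)| / |h|. *)
Lemma takagi_quotient_near_balance M L h : h <> 0 -> 0 <= x + h <= 1 ->
  in_cell eps M (x + h) ->
  Rabs (takagi_quotient x h - balance eps M) <= INR L + / Rabs h / 2 ^ (M + L).
Proof.
  intros Hh Hxh Hcell. pose proof digits_point_range as Hx.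
  set (c := takagi_term_quotient x h).
  set (r := / Rabs h).
  assert (Hr : 0 < r) by (apply Rinv_0_lt_compat, Rabs_pos_lt, Hh).
  rewrite <- (psum_takagi_term_quotient M h) by auto. fold c.
  apply Rabs_le_between'.
  apply (series_bounds c _ _ _ (M + L) (is_series_takagi_quotient x h ltac:(lra) Hxh)).
  intros m Hm. apply Rabs_le_between'.
  replace (psum c m - psum c M) with
    ((psum c (M + L) - psum c M) + (psum c m - psum c (M + L))) by ring.
  apply (Rle_trans _ _ _ (Rabs_triang _ _)), Rplus_le_compat.
  - apply (Rle_trans _ (psum (fun _ => 1) (M + L) - psum (fun _ => 1) M)).
    + apply psum_diff_abs_le; [lia|]. intros k _. apply takagi_term_quotient_abs_le_1, Hh.
    + rewrite !psum_const, plus_INR. lra.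
  - apply (Rle_trans _ (psum (fun k => r / 2 ^ S k) m - psum (fun k => r / 2 ^ S k) (M + L))).
    + apply psum_diff_abs_le; [lia|]. intros k _.
      apply takagi_term_quotient_abs_le_pow; lra || auto.
    + rewrite !psum_half_pow. pose proof (pow_inv_pos m). unfold Rdiv. nra.
Qed.

Lemma right_scales n0 : exists delta, 0 < delta /\ forall h, 0 < h < delta ->
  exists M K, (n0 <= M)%nat /\
    Rabs (takagi_quotient x h - balance eps M) <= INR K + 2 /\
    (1 - digit_tail eps x (S M)) * 2 ^ K < 2.
Proof.
  pose proof digits_point_range as Hx.
  pose proof (digit_tail_range n0). pose proof (pow_inv_pos n0).
  exists (Rmin (1 - x) (/ 2 ^ n0 * (1 - digit_tail eps x n0))).
  split; [apply Rmin_pos; nra|].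
  intros h [Hh Hhd].
  pose proof (Rmin_l (1 - x) (/ 2 ^ n0 * (1 - digit_tail eps x n0))).
  pose proof (Rmin_r (1 - x) (/ 2 ^ n0 * (1 - digit_tail eps x n0))).
  destruct (exists_pow_inv_lt h n0 Hh) as [m [Hm Hmh]].
  (* M is the last level at which x + h still lies in the cell of x. *)
  destruct (exists_last (fun M => h <= / 2 ^ M * (1 - digit_tail eps x M)) n0 m)
    as [M [HM [Hin Hout]]]; [lra| |exact Hm|].
  { pose proof (digit_tail_range m). pose proof (pow_inv_pos m). nra. }
  cbv beta in Hin, Hout. apply Rnot_le_lt in Hout.
  pose proof (digit_tail_range M). pose proof (digit_tail_range (S M)).
  pose proof (pow_inv_pos M).
  destruct (exists_dyadic_scale M h) as [K [HK1 HK2]]; [split; nra|].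
  exists M, K. split; [exact HM|]. split.
  - pose proof (takagi_quotient_near_balance M (S K) h ltac:(lra) ltac:(lra)
      (in_cell_right M h ltac:(lra))) as Hnear.
    rewrite (Rabs_pos_eq h), S_INR in Hnear by lra.
    assert (/ h / 2 ^ (M + S K) <= 1).
    { unfold Rdiv. rewrite Rmult_comm. apply (Rmult_le_reg_r h); [lra|].
      rewrite Rmult_assoc, Rinv_l, Rmult_1_l, Rmult_1_r by lra. exact HK1. }
    lra.
  - apply (pow_inv_mul_lt _ M). lra.
Qed.

Lemma ones_run L : forall n, (1 - digit_tail eps x n) * 2 ^ L < 1 ->
  ones eps (n + L) = ones eps n + INR L.
Proof.
  induction L as [|L IH]; intros n H; [rewrite Nat.add_0_r; simpl; ring|].
  pose proof (pow_R1_Rle 2 L ltac:(lra)).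
  pose proof (digit_tail_range n). pose proof (digit_tail_range (S n)).
  pose proof (digit_tail_succ eps x n) as Hs. simpl pow in H.
  destruct (INR_digit_cases n) as [E|E]; rewrite E in Hs; [exfalso; nra|].
  rewrite Nat.add_succ_r, <- Nat.add_succ_l, IH.
  - simpl ones. rewrite E, S_INR. ring.
  - rewrite Hs. nra.
Qed.

Lemma ones_gain_right M K : (1 - digit_tail eps x (S M)) * 2 ^ K < 2 ->
  ones eps M + INR K - 1 <= ones eps (M + K).
Proof.
  intros H. destruct K as [|K]; [rewrite Nat.add_0_r; simpl; lra|].
  rewrite Nat.add_succ_r, <- Nat.add_succ_l, ones_run by (simpl pow in H; lra).
  simpl ones. rewrite S_INR. destruct (INR_digit_cases M) as [E|E]; rewrite E; lra.
Qed.

Lemma digit_tail_eq_of_split m z s : 2 ^ m * x = IZR z + s -> 0 < s <= 1 ->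
  digit_tail eps x m = s.
Proof.
  intros E Hs. pose proof (digit_tail_range m). unfold digit_tail in *.
  assert (Hz1 : IZR (z - digit_prefix eps m) < 1) by (rewrite minus_IZR; lra).
  assert (Hz2 : -1 < IZR (z - digit_prefix eps m)) by (rewrite minus_IZR; lra).
  apply lt_IZR in Hz1. apply lt_IZR in Hz2.
  replace z with (digit_prefix eps m) in E by lia. lra.
Qed.

Variable a : nat -> nat.
Hypothesis Ha_incr : forall n, (a n < a (S n))%nat.
Hypothesis Ha_series : is_series (fun n => / 2 ^ a n) x.

(* Between a_n and a_(n+1) the tail of x starts with the digit 1 at position a_(n+1). *)
Lemma digit_tail_ge_sparse n m : (a n <= m < a (S n))%nat ->
  2 ^ m / 2 ^ a (S n) <= digit_tail eps x m.
Proof.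
  intros Hm. set (w := fun i => / 2 ^ a i).
  destruct (pow_mul_psum_inv_pow_integer a m (S n)) as [z Hz].
  { intros i Hi. pose proof (strict_incr_add_le a Ha_incr i (n - i)) as Hshift.
    replace (i + (n - i))%nat with n in Hshift by lia. lia. }
  assert (Htail : w (S n) <= x - psum w (S n) <= 2 * w (S n)).
  { enough (psum w (S n) + w (S n) <= x <= psum w (S n) + 2 * w (S n)) by lra.
    apply (series_bounds w x _ _ (S (S n)) Ha_series). intros k Hk. split.
    - apply (Rle_trans _ (psum w (S (S n)))); [cbn [psum]; lra|].
      apply psum_le_psum; [exact Hk | intros i; left; apply pow_inv_pos].
    - pose proof (psum_inv_pow_strict_incr a (S n) k Ha_incr ltac:(lia)).
      pose proof (pow_inv_pos (a k)). unfold w, Rdiv in *. lra. }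
  set (s := 2 ^ m * (x - psum w (S n))).
  assert (Hsplit : 2 ^ m * x = IZR z + s) by (unfold s, w in *; rewrite <- Hz; ring).
  pose proof (pow_lt 2 m ltac:(lra)). pose proof (pow_lt 2 (a (S n)) ltac:(lra)).
  assert (Hpow : 2 * 2 ^ m <= 2 ^ a (S n)) by (apply (Rle_pow 2 (S m)); [lra | lia]).
  assert (Hw : 2 ^ a (S n) * w (S n) = 1) by (unfold w; field; lra).
  assert (Hw0 : 0 < w (S n)) by apply pow_inv_pos.
  assert (Hs : 2 ^ m * w (S n) <= s <= 1) by (unfold s; split; nra).
  rewrite (digit_tail_eq_of_split m z s Hsplit) by nra. exact (proj1 Hs).
Qed.

Lemma zero_run_in_gap n1 M K : (a n1 <= S M)%nat ->
  digit_tail eps x (S M) * 2 ^ K < 2 ->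
  exists n, (n1 <= n)%nat /\ (a n <= S M)%nat /\ (M + K < a (S n))%nat.
Proof.
  intros Hn1 HK. pose proof (strict_incr_add_le a Ha_incr 0) as Hadd. simpl in Hadd.
  destruct (exists_last (fun n => a n <= S M)%nat n1 (S (S M))) as [n [Hn [Hin Hout]]];
    [exact Hn1 | specialize (Hadd (S (S M))); lia | specialize (Hadd n1); lia |].
  cbv beta in Hin, Hout. exists n. repeat split; [exact Hn | exact Hin|].
  pose proof (digit_tail_ge_sparse n (S M) ltac:(lia)) as Ht.
  destruct (le_lt_dec (a (S n)) (M + K)) as [C|C]; [exfalso|exact C].
  apply (Rle_pow 2) in C; [|lra]. rewrite pow_add in C.
  pose proof (pow_lt 2 (a (S n)) ltac:(lra)). pose proof (pow_lt 2 K ltac:(lra)).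
  pose proof (pow_lt 2 M ltac:(lra)). simpl pow in Ht. unfold Rdiv in Ht.
  apply (Rmult_le_compat_r (2 ^ K * 2 ^ a (S n))) in Ht; [|nra].
  replace (2 * 2 ^ M * / 2 ^ a (S n) * (2 ^ K * 2 ^ a (S n))) with (2 * (2 ^ M * 2 ^ K))
    in Ht by (field; lra).
  nra.
Qed.

End Digits.

(** * Reflection x -> 1 - x *)

Definition complement (eps : nat -> nat) (k : nat) : nat := (1 - eps k)%nat.

Lemma not_dyadic_reflect x : ~ dyadic x -> ~ dyadic (1 - x).
Proof.
  intros Hnd [k [m E]]. apply Hnd. exists (2 ^ Z.of_nat m - k)%Z, m.
  rewrite minus_IZR, <- pow_IZR. replace x with (1 - (1 - x)) at 1 by ring.
  rewrite E. field. apply pow_nonzero. lra.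
Qed.

Section Reflection.

Variables (x : R) (eps : nat -> nat).
Hypothesis Hdig : digits x eps.

Lemma INR_complement k : (1 <= k)%nat -> INR (complement eps k) = 1 - INR (eps k).
Proof. intros Hk. unfold complement. rewrite minus_INR by (apply Hdig, Hk). reflexivity. Qed.

Lemma digits_reflect : digits (1 - x) (complement eps).
Proof.
  split; [intros k _; unfold complement; lia|].
  pose proof (is_series_minus _ _ _ _ is_series_half_pow (proj2 Hdig)) as H.
  eapply is_series_ext; [|exact H].
  intros k. unfold minus, plus, opp; simpl. rewrite INR_complement by lia.
  field. apply pow_nonzero. lra.
Qed.

Lemma digit_tail_reflect j : digit_tail (complement eps) (1 - x) j = 1 - digit_tail eps x j.
Proof.
  induction j as [|j IH]; [unfold digit_tail; simpl; ring|].
  rewrite !digit_tail_succ, IH, INR_complement by lia. ring.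
Qed.

Lemma ones_reflect n : ones (complement eps) n = INR n - ones eps n.
Proof.
  induction n as [|n IH]; [simpl; ring|].
  simpl ones. rewrite IH, INR_complement, S_INR by lia. ring.
Qed.

Lemma balance_reflect n : balance (complement eps) n = - balance eps n.
Proof. unfold balance. rewrite ones_reflect. ring. Qed.

Lemma density_reflect (d : R) : is_lim_seq (fun n => ones eps (S n) / INR (S n)) d ->
  is_lim_seq (fun n => ones (complement eps) (S n) / INR (S n)) (1 - d).
Proof.
  intros Hd. apply (is_lim_seq_ext (fun n => 1 - ones eps (S n) / INR (S n))).
  - intros n. rewrite ones_reflect. field. apply not_0_INR. lia.
  - exact (is_lim_seq_minus' _ _ _ _ (is_lim_seq_const 1) Hd).
Qed.

Hypothesis Hnd : ~ dyadic x.

Lemma left_scales n0 : exists delta, 0 < delta /\ forall h, - delta < h < 0 ->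
  exists M K, (n0 <= M)%nat /\
    Rabs (takagi_quotient x h - balance eps M) <= INR K + 2 /\
    digit_tail eps x (S M) * 2 ^ K < 2.
Proof.
  destruct (right_scales (1 - x) (complement eps) digits_reflect (not_dyadic_reflect x Hnd) n0)
    as [delta [Hdelta Hright]].
  exists delta. split; [exact Hdelta|]. intros h Hh.
  destruct (Hright (- h) ltac:(lra)) as [M [K [HM [Hnear Hrun]]]].
  rewrite balance_reflect in Hnear. rewrite digit_tail_reflect in Hrun.
  exists M, K. repeat split; [exact HM | | lra].
  rewrite takagi_quotient_reflect by lra.
  replace (- takagi_quotient (1 - x) (- h) - balance eps M)
    with (- (takagi_quotient (1 - x) (- h) - - balance eps M)) by ring.
  now rewrite Rabs_Ropp.
Qed.

Lemma ones_gain_left M K : digit_tail eps x (S M) * 2 ^ K < 2 ->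
  ones eps (M + K) <= ones eps M + 1.
Proof.
  intros Hrun.
  pose proof (ones_gain_right (1 - x) (complement eps) digits_reflect
    (not_dyadic_reflect x Hnd) M K) as H.
  rewrite digit_tail_reflect, !ones_reflect, plus_INR in H. lra.
Qed.

End Reflection.

(** * Digit frequencies *)

Lemma ones_density eps (d : R) : is_lim_seq (fun n => ones eps (S n) / INR (S n)) d ->
  forall e, 0 < e -> exists N, forall n, (N <= n)%nat ->
    (d - e) * INR n <= ones eps n <= (d + e) * INR n.
Proof.
  intros H e He. apply is_lim_seq_spec in H.
  destruct (H (mkposreal e He)) as [N HN]. exists (S N). intros n Hn.
  destruct n as [|n]; [lia|]. specialize (HN n ltac:(lia)).
  change (Rabs (ones eps (S n) / INR (S n) - d) < e) in HN.
  assert (0 < INR (S n)) by (apply lt_0_INR; lia).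
  set (r := ones eps (S n) / INR (S n)) in HN.
  replace (ones eps (S n)) with (r * INR (S n)) by (unfold r; field; lra).
  apply Rabs_lt_between' in HN. split; nra.
Qed.

Lemma exists_nat_gt r : exists N, r < INR N.
Proof. destruct (INR_archimed 1 r ltac:(lra)) as [N HN]. exists N. lra. Qed.

Section Balance.

Variables (eps : nat -> nat) (d : R).
Hypothesis Hdens : is_lim_seq (fun n => ones eps (S n) / INR (S n)) d.

(* The run of ones gives balance M - K >= balance (M + K) - 2, of order (1 - 2d)(M + K). *)
Lemma balance_large_right : d < 1/2 -> forall B, exists n0, forall M K, (n0 <= M)%nat ->
  ones eps M + INR K - 1 <= ones eps (M + K) -> B < balance eps M - INR K - 2.
Proof.
  intros Hd B. set (th := 1/2 - d).
  destruct (ones_density eps d Hdens (th / 2) ltac:(unfold th; lra)) as [N HN].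
  destruct (exists_nat_gt ((B + 4) / th)) as [N2 HN2].
  exists (max N N2). intros M K HM HK.
  destruct (HN (M + K)%nat ltac:(lia)) as [_ Hup]. rewrite plus_INR in Hup.
  assert (INR N2 <= INR M) by (apply le_INR; lia).
  pose proof (pos_INR K).
  assert (B + 4 < INR N2 * th).
  { apply (Rmult_lt_compat_r th) in HN2; [|unfold th; lra].
    replace ((B + 4) / th * th) with (B + 4) in HN2 by (field; unfold th; lra). lra. }
  unfold balance. unfold th in *. nra.
Qed.

(* A run of zeros lowers the frequency of ones, so d K <= 4 e M + 2 with e << d. *)
Lemma balance_large_left : 0 < d < 1/2 -> forall B, exists n0, forall M K, (n0 <= M)%nat ->
  ones eps (M + K) <= ones eps M + 1 -> B < balance eps M - INR K - 2.
Proof.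
  intros Hd B. set (th := 1 - 2 * d). set (e := th * d / 16).
  assert (Hth : 0 < th) by (unfold th; lra).
  assert (He : 0 < e) by (unfold e; nra).
  assert (He2 : e <= d / 2) by (unfold e, th; nra).
  destruct (ones_density eps d Hdens e He) as [N HN].
  destruct (exists_nat_gt ((B + 2 / d + 2) * 2 / th)) as [N2 HN2].
  exists (max N N2). intros M K HM HK.
  destruct (HN (M + K)%nat ltac:(lia)) as [Hlo _].
  destruct (HN M ltac:(lia)) as [_ Hup].
  rewrite plus_INR in Hlo.
  assert (INR N2 <= INR M) by (apply le_INR; lia).
  pose proof (pos_INR K). pose proof (pos_INR M).
  assert (HK1 : d / 2 * INR K <= 2 * e * INR M + 1) by nra.
  assert (HK2 : INR K <= th / 4 * INR M + 2 / d).
  { apply (Rmult_le_reg_l (d / 2)); [lra|].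
    replace (d / 2 * (th / 4 * INR M + 2 / d)) with (th * d / 8 * INR M + 1) by (field; lra).
    unfold e in HK1. lra. }
  assert (HM2 : B + 2 / d + 2 < th / 2 * INR M).
  { apply (Rmult_lt_compat_r (th / 2)) in HN2; [|lra].
    replace ((B + 2 / d + 2) * 2 / th * (th / 2)) with (B + 2 / d + 2) in HN2 by (field; lra).
    nra. }
  assert (2 * e * INR M <= th / 16 * INR M) by (unfold e; apply Rmult_le_compat_r; nra).
  assert (d * INR M = INR M / 2 - th * INR M / 2) by (unfold th; field).
  assert (0 <= th * INR M) by nra.
  unfold balance. lra.
Qed.

(* The run of zeros lies in a gap a_n <= M + 1 <= M + K < a_(n+1) <= c a_n, so
   K <= (c - 1)(M + 1) with c - 1 < 1. *)
Lemma balance_large_sparse (a : nat -> nat) c n1 : d = 0 ->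
  (forall n, (a n < a (S n))%nat) -> c < 2 ->
  (forall n, (n1 <= n)%nat -> INR (a (S n)) <= c * INR (a n)) ->
  forall B, exists n0, forall M K n, (n0 <= M)%nat -> (n1 <= n)%nat ->
    (a n <= S M)%nat -> (M + K < a (S n))%nat -> B < balance eps M - INR K - 2.
Proof.
  intros Hd0 Ha Hc Hratio B. subst d. set (e := (2 - c) / 4).
  destruct (ones_density eps 0 Hdens e ltac:(unfold e; lra)) as [N HN].
  destruct (exists_nat_gt ((B + c + 1) * 2 / (2 - c))) as [N2 HN2].
  exists (max N N2). intros M K n HM Hn Hlo Hgap.
  destruct (HN M ltac:(lia)) as [_ Hup].
  specialize (Hratio n Hn).
  assert (Hgap' : INR K + INR M + 1 <= INR (a (S n))).
  { rewrite <- plus_INR, <- S_INR. apply le_INR. lia. }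
  assert (Hlo' : INR (a n) <= INR M + 1) by (rewrite <- S_INR; apply le_INR; exact Hlo).
  assert (Hpos : 1 <= INR (a (S n))) by (apply (le_INR 1); specialize (Ha n); lia).
  pose proof (pos_INR (a n)). pose proof (pos_INR M).
  assert (Hc0 : 0 <= c) by nra.
  assert (INR N2 <= INR M) by (apply le_INR; lia).
  assert (HM2 : B + c + 1 < (2 - c) / 2 * INR M).
  { apply (Rmult_lt_compat_r ((2 - c) / 2)) in HN2; [|lra].
    replace ((B + c + 1) * 2 / (2 - c) * ((2 - c) / 2)) with (B + c + 1) in HN2
      by (field; lra).
    nra. }
  unfold balance. unfold e in Hup. nra.
Qed.

End Balance.

(** * Infinite derivatives *)

Lemma takagi_quotient_unbounded x eps (a : nat -> nat) (d : R) :
  digits x eps -> ~ dyadic x ->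
  (forall n, (a n < a (S n))%nat) -> is_series (fun n => / 2 ^ a n) x ->
  is_lim_seq (fun n => ones eps (S n) / INR (S n)) d ->
  (0 < d < 1/2 \/ (d = 0 /\ exists c n1, c < 2 /\
     forall n, (n1 <= n)%nat -> INR (a (S n)) <= c * INR (a n))) ->
  forall B, exists delta, 0 < delta /\
    forall h, h <> 0 -> Rabs h < delta -> B < takagi_quotient x h.
Proof.
  intros Hdig Hnd Ha Hsa Hdens Hcase B.
  assert (Hd : d < 1/2) by (destruct Hcase as [?|[-> _]]; lra).
  destruct (balance_large_right eps d Hdens Hd B) as [nr Hr].
  assert (Hl : exists nl, forall M K, (nl <= M)%nat ->
             digit_tail eps x (S M) * 2 ^ K < 2 -> B < balance eps M - INR K - 2).
  { destruct Hcase as [Hpos | [Hd0 [c [n1 [Hc Hratio]]]]].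
    - destruct (balance_large_left eps d Hdens Hpos B) as [nl Hl].
      exists nl. intros M K HM Hrun. exact (Hl M K HM (ones_gain_left x eps Hdig Hnd M K Hrun)).
    - destruct (balance_large_sparse eps d Hdens a c n1 Hd0 Ha Hc Hratio B) as [nl Hl].
      exists (max nl (a n1)). intros M K HM Hrun.
      destruct (zero_run_in_gap x eps Hdig Hnd a Ha Hsa n1 M K ltac:(lia) Hrun)
        as [n [Hn [Hlo Hgap]]].
      exact (Hl M K n ltac:(lia) Hn Hlo Hgap). }
  destruct Hl as [nl Hl].
  destruct (right_scales x eps Hdig Hnd nr) as [dr [Hdr Hright]].
  destruct (left_scales x eps Hdig Hnd nl) as [dl [Hdl Hleft]].
  exists (Rmin dr dl). split; [apply Rmin_pos; assumption|].
  intros h Hh0 Hh. pose proof (Rmin_l dr dl). pose proof (Rmin_r dr dl).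
  destruct (Rtotal_order h 0) as [Hneg|[Heq|Hpos]]; [| contradiction |].
  - rewrite Rabs_left in Hh by exact Hneg.
    destruct (Hleft h ltac:(lra)) as [M [K [HM [Hnear Hrun]]]].
    pose proof (Hl M K HM Hrun). apply Rabs_le_between' in Hnear. lra.
  - rewrite Rabs_pos_eq in Hh by lra.
    destruct (Hright h ltac:(lra)) as [M [K [HM [Hnear Hrun]]]].
    pose proof (Hr M K HM (ones_gain_right x eps Hdig Hnd M K Hrun)).
    apply Rabs_le_between' in Hnear. lra.
Qed.

Lemma ratio_bound_of_LimSup (a : nat -> nat) : (forall n, (1 <= a n)%nat) ->
  Rbar_lt (LimSup_seq (fun n => INR (a (S n)) / INR (a n))) 2 ->
  exists c n1, c < 2 /\ forall n, (n1 <= n)%nat -> INR (a (S n)) <= c * INR (a n).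
Proof.
  intros Ha1 H. unfold LimSup_seq in H.
  destruct (ex_LimSup_seq (fun n => INR (a (S n)) / INR (a n))) as [l Hl]. simpl in H.
  assert (Hu : exists c n1, c < 2 /\
            forall n, (n1 <= n)%nat -> INR (a (S n)) / INR (a n) < c).
  { destruct l as [r| |]; simpl in H, Hl; [|contradiction|].
    - destruct (Hl (mkposreal ((2 - r) / 2) ltac:(lra))) as [_ [n1 Hn1]].
      exists (r + (2 - r) / 2), n1. split; [lra | exact Hn1].
    - destruct (Hl 1) as [n1 Hn1]. exists 1, n1. split; [lra | exact Hn1]. }
  destruct Hu as [c [n1 [Hc Hn1]]]. exists c, n1. split; [exact Hc|]. intros n Hn.
  specialize (Hn1 n Hn). assert (0 < INR (a n)) by (apply lt_0_INR; specialize (Ha1 n); lia).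
  apply (Rmult_lt_compat_r (INR (a n))) in Hn1; [|assumption].
  unfold Rdiv in Hn1. rewrite Rmult_assoc, Rinv_l in Hn1 by lra. lra.
Qed.

Lemma is_lim_0_p_infty_intro (f : R -> R) :
  (forall B, exists delta, 0 < delta /\ forall h, h <> 0 -> Rabs h < delta -> B < f h) ->
  is_lim f 0 p_infty.
Proof.
  intros H. apply is_lim_spec. intros B. destruct (H B) as [delta [Hdelta Hf]].
  exists (mkposreal delta Hdelta). intros h Hh Hh0. apply Hf; [exact Hh0|].
  change (Rabs (h - 0) < delta) in Hh. now rewrite Rminus_0_r in Hh.
Qed.

Lemma takagi_derivative_p_infty x eps (a : nat -> nat) (d : R) :
  digits x eps -> ~ dyadic x ->
  (forall n, (1 <= a n)%nat) -> (forall n, (a n < a (S n))%nat) ->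
  is_series (fun n => / 2 ^ a n) x ->
  is_lim_seq (fun n => ones eps (S n) / INR (S n)) d ->
  (0 < d < 1/2 \/
     (d = 0 /\ Rbar_lt (LimSup_seq (fun n => INR (a (S n)) / INR (a n))) 2)) ->
  is_lim (takagi_quotient x) 0 p_infty.
Proof.
  intros Hdig Hnd Ha1 Ha Hsa Hdens Hcase.
  apply is_lim_0_p_infty_intro, (takagi_quotient_unbounded x eps a d); try assumption.
  destruct Hcase as [Hpos | [Hd0 Hsup]]; [left; exact Hpos|].
  right. split; [exact Hd0 | exact (ratio_bound_of_LimSup a Ha1 Hsup)].
Qed.

Lemma takagi_derivative_reflect x : is_lim (takagi_quotient (1 - x)) 0 p_infty ->
  is_lim (takagi_quotient x) 0 m_infty.
Proof.
  intros H.
  assert (Hopp : is_lim (fun h => - h) 0 0).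
  { replace (Finite 0) with (Rbar_opp 0) at 2 by (simpl; f_equal; ring).
    apply is_lim_opp, is_lim_id. }
  assert (Hnz : Rbar_locally' 0 (fun h => Finite (- h) <> Finite 0)).
  { exists (mkposreal 1 Rlt_0_1). intros h _ Hh E. injection E. lra. }
  apply (is_lim_ext_loc (fun h => - takagi_quotient (1 - x) (- h))).
  - exists (mkposreal 1 Rlt_0_1). intros h _ Hh. symmetry. apply takagi_quotient_reflect, Hh.
  - exact (is_lim_opp _ _ _ (is_lim_comp _ _ 0 p_infty 0 H Hopp Hnz)).
Qed.

Lemma sum_f_ones eps n : sum_f 1 (S n) (fun k => INR (eps k)) = ones eps (S n).
Proof.
  unfold sum_f. replace (S n - 1)%nat with n by lia.
  induction n as [|n IH]; [simpl; ring|].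
  simpl sum_f_R0. rewrite IH, Nat.add_1_r. reflexivity.
Qed.

Theorem corollary2 (x : R) (eps : nat -> nat) (a b : nat -> nat) (d : R) :
  0 < x < 1 ->
  ~ dyadic x ->
  (forall k, (1 <= k)%nat -> (eps k <= 1)%nat) ->
  is_series (fun k : nat => INR (eps (S k)) / 2 ^ (S k)) x ->
  (forall n, (1 <= a n)%nat) -> (forall n, (a n < a (S n))%nat) ->
  (forall n, (1 <= b n)%nat) -> (forall n, (b n < b (S n))%nat) ->
  is_series (fun n : nat => / 2 ^ (a n)) x ->
  is_series (fun n : nat => / 2 ^ (b n)) (1 - x) ->
  is_lim_seq (fun n : nat => sum_f 1 (S n) (fun k => INR (eps k)) / INR (S n)) d ->
  (((0 < d < 1/2) \/
     (d = 0 /\ Rbar_lt (LimSup_seq (fun n => INR (a (S n)) / INR (a n))) (Finite 2))) ->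
    is_lim (fun h => (takagi (x + h) - takagi x) / h) 0 p_infty)
  /\
  (((1/2 < d < 1) \/
     (d = 1 /\ Rbar_lt (LimSup_seq (fun n => INR (b (S n)) / INR (b n))) (Finite 2))) ->
    is_lim (fun h => (takagi (x + h) - takagi x) / h) 0 m_infty).
Proof.
  intros _ Hnd Heps Hser Ha1 Ha Hb1 Hb Hsa Hsb Hlim.
  assert (Hdig : digits x eps) by (split; assumption).
  assert (Hdens : is_lim_seq (fun n => ones eps (S n) / INR (S n)) d).
  { refine (is_lim_seq_ext _ _ _ _ Hlim). intros n. now rewrite sum_f_ones. }
  split; intros Hcase.
  - exact (takagi_derivative_p_infty x eps a d Hdig Hnd Ha1 Ha Hsa Hdens Hcase).
  - apply takagi_derivative_reflect.
    apply (takagi_derivative_p_infty (1 - x) (complement eps) b (1 - d)); try assumption.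
    + exact (digits_reflect x eps Hdig).
    + exact (not_dyadic_reflect x Hnd).
    + exact (density_reflect x eps Hdig d Hdens).
    + destruct Hcase as [Hpos | [Hd1 Hsup]]; [left; lra | right; split; [lra | exact Hsup]].
Qed.
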